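(* Let $n\ge 1$, $\mathbf{C} = (C_1,\dots,C_n)\in[0,1]^n$ and $\mathbf{V} = (V_1,\dots,V_n)\in[0,1]^n$. Define $$r^{\mathbf{L}}(\mathbf{C},\mathbf{V}) = \frac{1}{n}\sum_{j=1}^n (C_j - V_j), \qquad r^{\mathbf{V}}(\mathbf{C},\mathbf{V}) = \frac{1}{n}\sqrt{\Big(\sum_{j=1}^n C_j\cos V_j\Big)^2 + \Big(\sum_{j=1}^n C_j \sin V_j\Big)^2}.$$ For $i\in\{1,\dots,n\}$ and $\Delta c>0$, let $\Delta r^{\mathbf{L}}(C_i) = r^{\mathbf{L}}(\mathbf{C}+\Delta c\,\mathbf{e}_i,\mathbf{V}) - r^{\mathbf{L}}(\mathbf{C},\mathbf{V})$ and $\Delta r^{\mathbf{V}}(C_i) = r^{\mathbf{V}}(\mathbf{C}+\Delta c\,\mathbf{e}_i,\mathbf{V}) - r^{\mathbf{V}}(\mathbf{C},\mathbf{V})$, where $\mathbf{e}_i$ is the $i$-th standard basis vector. Then $\Delta r^{\mathbf{V}}(C_i) > 0$ and $\Delta r^{\mathbf{V}}(C_i) \le \Delta r^{\mathbf{L}}(C_i) = \frac{\Delta c}{n}$.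
   Context: Here $C_j$ and $V_j$ are the consistency and volatility of the $j$-th reasoning trajectory in a group of $n$ trajectories sharing the same final answer; $r^{\mathbf{L}}$ is the linear intrinsic reward and $r^{\mathbf{V}}$ the vectorial intrinsic reward (magnitude of the averaged vectors $C_j(\cos V_j, \sin V_j)$). *)

From HB Require Import structures.
From mathcomp Require Import all_boot all_order all_algebra.
From mathcomp Require Import all_classical all_reals all_analysis.
Unset Printing Implicit Defensive.
Import Order.TTheory GRing.Theory Num.Theory.
Local Open Scope ring_scope.

Definition rewardL (R : realType) (n : nat) (C V : 'I_n -> R) : R :=
  n%:R^-1 * \sum_(j < n) (C j - V j).

Definition rewardV (R : realType) (n : nat) (C V : 'I_n -> R) : R :=
  n%:R^-1 * Num.sqrt ((\sum_(j < n) C j * cos (V j)) ^+ 2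
                      + (\sum_(j < n) C j * sin (V j)) ^+ 2).

Definition perturbC (R : realType) (n : nat) (C : 'I_n -> R) (i : 'I_n) (dc : R)
  : 'I_n -> R := fun j => if j == i then C j + dc else C j.

(* The vectorial reward is 1/n times the length of S = sum_j C_j u(V_j), where
   u(t) = (cos t, sin t) is a unit vector.  Raising C_i by dc replaces S by
   S + dc u(V_i).  Since all angles V_j lie in [0, 1] and 1 < pi/2, every
   summand makes an acute angle with u(V_i), so <S, u(V_i)> >= 0 and
   |S + dc u(V_i)|^2 = |S|^2 + 2 dc <S, u(V_i)> + dc^2 > |S|^2.  The triangle
   inequality gives |S + dc u(V_i)| <= |S| + dc, while the linear reward grows
   by exactly dc / n. *)
From HB Require Import structures.
From mathcomp Require Import all_boot all_order all_algebra.
From mathcomp Require Import all_classical all_reals all_analysis.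
From mathcomp Require Import ring lra.
Import Order.TTheory GRing.Theory Num.Theory.
Local Open Scope ring_scope.

Section Hypot.
Variable R : rcfType.

Definition hypot (x y : R) : R := Num.sqrt (x ^+ 2 + y ^+ 2).

Lemma hypot_ge0 (x y : R) : 0 <= hypot x y.
Proof. exact: sqrtr_ge0. Qed.

Lemma sqr_hypot (x y : R) : hypot x y ^+ 2 = x ^+ 2 + y ^+ 2.
Proof. by rewrite sqr_sqrtr // addr_ge0 ?sqr_ge0. Qed.

Lemma ltr_hypot (x y x' y' : R) :
  (hypot x y < hypot x' y') = (x ^+ 2 + y ^+ 2 < x' ^+ 2 + y' ^+ 2).
Proof. by rewrite -(ltr_pXn2r (ltn0Sn 1)) ?nnegrE ?hypot_ge0 // !sqr_hypot. Qed.

Variables (u v : R).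
Hypothesis unit_uv : u ^+ 2 + v ^+ 2 = 1.

Lemma dot_unit_le_hypot (x y : R) : x * u + y * v <= hypot x y.
Proof.
have cauchy_schwarz : (x * u + y * v) ^+ 2 <= x ^+ 2 + y ^+ 2.
  have lagrange : (x ^+ 2 + y ^+ 2) * (u ^+ 2 + v ^+ 2)
                  = (x * u + y * v) ^+ 2 + (x * v - y * u) ^+ 2 by ring.
  by rewrite -[leRHS]mulr1 -unit_uv lagrange lerDl sqr_ge0.
have := hypot_ge0 x y; have := sqr_hypot x y; nra.
Qed.

Lemma sqr_hypot_shift (x y d : R) :
  (x + d * u) ^+ 2 + (y + d * v) ^+ 2
  = x ^+ 2 + y ^+ 2 + 2 * d * (x * u + y * v) + d ^+ 2.
Proof.
have -> : d ^+ 2 = d ^+ 2 * (u ^+ 2 + v ^+ 2) by rewrite unit_uv mulr1.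
ring.
Qed.

Lemma hypot_shift_le (x y d : R) :
  0 <= d -> hypot (x + d * u) (y + d * v) <= hypot x y + d.
Proof.
move=> d_ge0; have hxy := hypot_ge0 x y.
rewrite -(ler_pXn2r (ltn0Sn 1)) ?nnegrE ?hypot_ge0 ?addr_ge0 // sqr_hypot sqr_hypot_shift.
rewrite sqrrD sqr_hypot.
have := dot_unit_le_hypot x y; nra.
Qed.

Lemma hypot_shift_gt (x y d : R) :
  0 <= x * u + y * v -> 0 < d -> hypot x y < hypot (x + d * u) (y + d * v).
Proof.
move=> dot_ge0 d_gt0; rewrite ltr_hypot sqr_hypot_shift.
have d_ge0 := ltW d_gt0.
have : 0 < d ^+ 2 by rewrite exprn_gt0.
have : 0 <= 2 * d * (x * u + y * v) by rewrite !mulr_ge0.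
lra.
Qed.

End Hypot.
Arguments hypot {R}.

Lemma cos_sub_ge0_unit_interval (R : realType) (x y : R) :
  0 <= x <= 1 -> 0 <= y <= 1 -> 0 <= cos (x - y).
Proof.
move=> /andP[x_ge0 x_le1] /andP[y_ge0 y_le1]; apply: cos_ge0_pihalf.
have pi_ge2 := pi_ge2 R; apply/andP; split; lra.
Qed.

Section Rewards.
Context {R : realType} {n : nat}.
Implicit Types (C V F : 'I_n -> R) (i : 'I_n) (dc : R).

Lemma sum_perturbC_mul C F i dc :
  \sum_(j < n) perturbC R n C i dc j * F j = \sum_(j < n) C j * F j + dc * F i.
Proof.
rewrite (bigD1 i) //= [in RHS](bigD1 i) //= /perturbC eqxx.
rewrite (eq_bigr (fun j => C j * F j)); last by move=> j /negbTE ->.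
by rewrite mulrDl -!addrA [dc * _ + _]addrC.
Qed.

Lemma rewardL_perturbC C V i dc :
  rewardL R n (perturbC R n C i dc) V - rewardL R n C V = dc / n%:R.
Proof.
rewrite /rewardL -mulrBr mulrC !sumrB.
have := sum_perturbC_mul C (fun=> 1) i dc.
under eq_bigr do rewrite mulr1; under [X in _ = X + _]eq_bigr do rewrite mulr1.
by move=> ->; congr (_ / _); lra.
Qed.

Lemma rewardV_perturbC C V i dc :
  rewardV R n (perturbC R n C i dc) V
  = n%:R^-1 * hypot (\sum_(j < n) C j * cos (V j) + dc * cos (V i))
                    (\sum_(j < n) C j * sin (V j) + dc * sin (V i)).
Proof. by rewrite /rewardV !sum_perturbC_mul. Qed.

Lemma sum_dir_dot_ge0 i C V :
  (forall j, 0 <= C j) -> (forall j, 0 <= V j <= 1) ->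
  0 <= (\sum_(j < n) C j * cos (V j)) * cos (V i)
       + (\sum_(j < n) C j * sin (V j)) * sin (V i).
Proof.
move=> C_ge0 V01; rewrite !mulr_suml -big_split /=; apply: sumr_ge0 => j _.
by rewrite -!mulrA -mulrDr -cosB mulr_ge0 ?cos_sub_ge0_unit_interval.
Qed.

End Rewards.

Theorem mainTheorem6 (R : realType) (n : nat) (C V : 'I_n -> R)
  (hn : (1 <= n)%N)
  (hC : forall j, 0 <= C j <= 1) (hV : forall j, 0 <= V j <= 1)
  (i : 'I_n) (dc : R) (hdc : 0 < dc) :
  let dL := rewardL R n (perturbC R n C i dc) V - rewardL R n C V in
  let dV := rewardV R n (perturbC R n C i dc) V - rewardV R n C V in
  0 < dV /\ dV <= dL /\ dL = dc / n%:R.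
Proof.
move=> dL dV.
have eL : dL = dc / n%:R by apply: rewardL_perturbC.
have n_gt0 : 0 < n%:R^-1 :> R by rewrite invr_gt0 ltr0n.
have unit_Vi := cos2Dsin2 (V i).
have eV : dV = n%:R^-1 * (hypot (\sum_(j < n) C j * cos (V j) + dc * cos (V i))
                                (\sum_(j < n) C j * sin (V j) + dc * sin (V i))
                          - hypot (\sum_(j < n) C j * cos (V j))
                                  (\sum_(j < n) C j * sin (V j))).
  by rewrite /dV rewardV_perturbC -mulrBr.
have C_ge0 j : 0 <= C j by case/andP: (hC j).
have dot_ge0 := sum_dir_dot_ge0 i C V C_ge0 hV.
split; [|split=> //].
- by rewrite eV mulr_gt0 // subr_gt0 hypot_shift_gt.
- by rewrite eL eV mulrC ler_pM2r // lerBlDl hypot_shift_le ?ltW.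
Qed.
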